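(* Let $A\in\mathrm{GL}(3,\mathbb{R})$ be a rotation of angle $\theta$ with $0<\theta<\pi$, and let $B=G^{-1}\,{}^tA^{-1}G$ for some $G\in\mathrm{GL}(3,\mathbb{R})$. Then $\det(\mathrm{Id}-AB)=0$ if and only if there exists a nonzero symmetric matrix $S$ such that $SB={}^tA^{-1}S$.
   Context: A matrix $A\in\mathrm{GL}(3,\mathbb{R})$ is a rotation of angle $\theta$ if there exist $Q\in\mathrm{GL}(3,\mathbb{R})$ and $\mu\ne0$ with $Q^{-1}AQ=\mu R_\theta$, where $R_\theta=\begin{pmatrix}1&0&0\\0&\cos\theta&-\sin\theta\\0&\sin\theta&\cos\theta\end{pmatrix}$. ${}^tM$ denotes the transpose of $M$. *)

From HB Require Import structures.
From mathcomp Require Import all_boot all_order all_algebra.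
From mathcomp Require Import all_classical all_reals all_analysis.
Set Implicit Arguments. Unset Strict Implicit. Unset Printing Implicit Defensive.
Import Order.TTheory GRing.Theory Num.Theory.
Local Open Scope ring_scope.

Definition rotmx (R : realType) (t : R) : 'M[R]_3 :=
  \matrix_(i < 3, j < 3)
    (if (i == 0%N :> nat) && (j == 0%N :> nat) then 1
     else if (i == 1%N :> nat) && (j == 1%N :> nat) then cos t
     else if (i == 1%N :> nat) && (j == 2%N :> nat) then - sin t
     else if (i == 2%N :> nat) && (j == 1%N :> nat) then sin t
     else if (i == 2%N :> nat) && (j == 2%N :> nat) then cos t
     else 0).

Definition is_rotation (R : realType) (A : 'M[R]_3) (t : R) : Prop :=
  exists (Q : 'M[R]_3) (mu : R),
    Q \in unitmx /\ mu != 0 /\ invmx Q *m A *m Q = mu *: rotmx t.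

From HB Require Import structures.
From mathcomp Require Import all_boot all_order all_algebra.
From mathcomp Require Import all_classical all_reals all_analysis.
From mathcomp Require Import ring.
Set Implicit Arguments. Unset Strict Implicit. Unset Printing Implicit Defensive.
Import Order.TTheory GRing.Theory Num.Theory.
Local Open Scope ring_scope.

(* Write Q^-1 A Q = mu R and change basis by Q, acting on A by similarity and on G by
   congruence: both conditions are invariant, and so is the scaling of A by mu, so A may
   be taken to be R itself and G an arbitrary invertible H.  Since
   A^T G - G A = (A^T G A^-1) (1 - A B) A, the determinant condition becomes
   det (R^T H - H R) = 0, and the symmetric S correspond to the X = S H^-1 commuting
   with R^T and making X H symmetric.  For sin t <> 0 these X form the algebra of the
   matrices [a 0 0; 0 b e; 0 -e b], the symmetry of X H is a 3 x 3 linear system L(H)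
   in (a, b, e), and det (R^T H - H R) = sin t ((1 - cos t)^2 + sin^2 t) det L(H). *)

Section FormCommutator.
Variables (F : fieldType) (n : nat).
Implicit Types (A C G P U X : 'M[F]_n).

(* The Gram matrix of (x, y) |-> <A x, y> - <x, A y> for the form <x, y> = x^T G y. *)
Definition form_commutator A G := A^T *m G - G *m A.

Definition commuting_symmetrizer A G : Prop :=
  exists2 X, X != 0 & comm_mx X A^T /\ (X *m G)^T = X *m G.

Lemma det_mulmx_unit_eq0 U X P : U \in unitmx -> P \in unitmx ->
  \det (U *m X *m P) = 0 <-> \det X = 0.
Proof.
rewrite !unitmxE !unitfE !det_mulmx => dU dP.
split => [/eqP | ->]; last by rewrite mulr0 mul0r.
by rewrite !mulf_eq0 (negbTE dU) (negbTE dP) orbF => /eqP.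
Qed.

Lemma det_1_sub_contragredient_eq0 A G : A \in unitmx -> G \in unitmx ->
  \det (1%:M - A *m (invmx G *m invmx A^T *m G)) = 0
  <-> \det (form_commutator A G) = 0.
Proof.
move=> uA uG; have uAt : A^T \in unitmx by rewrite unitmx_tr.
have -> : form_commutator A G
    = A^T *m G *m invmx A *m (1%:M - A *m (invmx G *m invmx A^T *m G)) *m A.
  rewrite /form_commutator mulmxBr mulmx1 mulmxBl (mulmxKV uA) !mulmxA.
  by rewrite (mulmxKV uA) (mulmxK uG) (mulmxV uAt) mul1mx.
apply: iff_sym; apply: det_mulmx_unit_eq0 => //.
by rewrite !unitmx_mul uAt uG unitmx_inv.
Qed.

Lemma det_form_commutator_change_basis_eq0 P A G : P \in unitmx ->
  \det (form_commutator (invmx P *m A *m P) (P^T *m G *m P)) = 0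
  <-> \det (form_commutator A G) = 0.
Proof.
move=> uP; have uPt : P^T \in unitmx by rewrite unitmx_tr.
have -> : form_commutator (invmx P *m A *m P) (P^T *m G *m P)
    = P^T *m form_commutator A G *m P.
  rewrite /form_commutator mulmxBr mulmxBl !trmx_mul trmx_inv !mulmxA.
  by rewrite (mulmxKV uPt) (mulmxK uP).
exact: det_mulmx_unit_eq0.
Qed.

Lemma det_form_commutatorZ_eq0 mu A G : mu != 0 ->
  \det (form_commutator (mu *: A) G) = 0 <-> \det (form_commutator A G) = 0.
Proof.
move=> nz_mu; rewrite /form_commutator linearZ /= -scalemxAl -scalemxAr -scalerBr detZ.
split => [/eqP | ->]; last by rewrite mulr0.
by rewrite mulf_eq0 expf_eq0 (negbTE nz_mu) andbF => /eqP.
Qed.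

Lemma comm_mx_inv C X : C \in unitmx -> comm_mx X C -> comm_mx X (invmx C).
Proof.
move=> uC XC; rewrite /comm_mx -{1}(mulKmx uC X) -XC.
by rewrite !mulmxA (mulmxK uC).
Qed.

Lemma contragredient_intertwiner_comm C G X : C \in unitmx -> G \in unitmx ->
  X *m G *m (invmx G *m invmx C *m G) = invmx C *m (X *m G) <-> comm_mx X C.
Proof.
move=> uC uG; rewrite !mulmxA (mulmxK uG); split => [|XC].
- move=> /(can_inj (mulmxK uG)) XC.
  by rewrite -(invmxK C); apply: comm_mx_inv; rewrite ?unitmx_inv.
- by rewrite (comm_mx_inv uC XC).
Qed.

Lemma sym_intertwinerP A G : A \in unitmx -> G \in unitmx ->
  (exists S, S != 0 /\ S^T = S /\ S *m (invmx G *m invmx A^T *m G) = invmx A^T *m S)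
  <-> commuting_symmetrizer A G.
Proof.
move=> uA uG; have uAt : A^T \in unitmx by rewrite unitmx_tr.
have nzG X : (X *m G == 0) = (X == 0) by rewrite mulmx_free_eq0 ?row_free_unit.
split => [[S [nzS [symS intS]]] | [X nzX [XA symX]]].
- have SE : S = S *m invmx G *m G by rewrite (mulmxKV uG).
  exists (S *m invmx G); first by rewrite -nzG -SE.
  by split; [apply/(contragredient_intertwiner_comm _ uAt uG); rewrite -SE | rewrite -SE].
- exists (X *m G); split; first by rewrite nzG.
  by split; last apply/(contragredient_intertwiner_comm _ uAt uG).
Qed.

Lemma commuting_symmetrizer_conj U A G : U \in unitmx ->
  commuting_symmetrizer A G ->
  commuting_symmetrizer (invmx U^T *m A *m U^T) (U *m G *m U^T).
Proof.
move=> uU [X nzX [XA symX]]; exists (U *m X *m invmx U).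
  apply: contraNneq nzX => UX0.
  by rewrite -(mulKmx uU X) -(mulmxKV uU (U *m X)) UX0 mul0mx mulmx0.
split.
  rewrite !trmx_mul trmx_inv trmxK /comm_mx -!mulmxA !(mulKmx uU).
  by rewrite (mulmxA X) (mulmxA A^T) XA.
have -> : U *m X *m invmx U *m (U *m G *m U^T) = U *m (X *m G) *m U^T.
  by rewrite -!mulmxA (mulKmx uU).
by rewrite trmx_mul trmxK trmx_mul symX mulmxA.
Qed.

Lemma commuting_symmetrizer_change_basis P A G : P \in unitmx ->
  commuting_symmetrizer (invmx P *m A *m P) (P^T *m G *m P)
  <-> commuting_symmetrizer A G.
Proof.
move=> uP; have uPt : P^T \in unitmx by rewrite unitmx_tr.
have uPti : invmx P^T \in unitmx by rewrite unitmx_inv.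
split => [|/(commuting_symmetrizer_conj uPt)]; last by rewrite trmxK.
move/(commuting_symmetrizer_conj uPti); rewrite trmx_inv !trmxK invmxK.
by rewrite !mulmxA (mulmxV uP) (mulVmx uPt) !mul1mx !(mulmxK uP).
Qed.

Lemma commuting_symmetrizerZ mu A G : mu != 0 ->
  commuting_symmetrizer (mu *: A) G <-> commuting_symmetrizer A G.
Proof.
move=> nz_mu; have commZ X : comm_mx X (mu *: A)^T <-> comm_mx X A^T.
  rewrite /comm_mx linearZ /= -scalemxAl -scalemxAr.
  by split => [/(scalerI nz_mu) | ->].
by split=> -[X nzX [XA symX]]; exists X => //; split => //; apply/commZ.
Qed.

End FormCommutator.

Lemma ord3P (i : 'I_3) : [\/ i = 0, i = 1 | i = 2].
Proof.
by case: i => [[|[|[|i]]] Hi] //;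
  [constructor 1 | constructor 2 | constructor 3]; apply: val_inj.
Qed.

Lemma ord3E : (ord0 = 0 :> 'I_3) * (lift ord0 ord0 = 1 :> 'I_3)
  * (lift ord0 (lift ord0 ord0) = 2 :> 'I_3).
Proof. by do !split; apply: val_inj. Qed.

Local Ltac mx_entries := rewrite ?mxE ?big_ord_recl ?big_ord0 ?mxE /= ?ord3E.
Local Ltac mx3_ext := apply/matrixP => /ord3P[]-> /ord3P[]->; mx_entries.
Local Ltac rv3_ext := apply/matrixP => /ord1-> /ord3P[]->; mx_entries.

Section Matrix3.
Variable F : fieldType.

Definition mx3 (l : seq (seq F)) : 'M[F]_3 :=
  \matrix_(i < 3, j < 3) nth 0 (nth [::] l i) j.

Definition rv3 (a b c : F) : 'rV[F]_3 := \row_(j < 3) nth 0 [:: a; b; c] j.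

Lemma mx3E (M : 'M[F]_3) : M = mx3
  [:: [:: M 0 0; M 0 1; M 0 2]; [:: M 1 0; M 1 1; M 1 2]; [:: M 2 0; M 2 1; M 2 2]].
Proof. by mx3_ext. Qed.

Lemma det_mx3 (M : 'M[F]_3) : \det M =
  M 0 0 * (M 1 1 * M 2 2 - M 1 2 * M 2 1)
  - M 0 1 * (M 1 0 * M 2 2 - M 1 2 * M 2 0)
  + M 0 2 * (M 1 0 * M 2 1 - M 1 1 * M 2 0).
Proof.
rewrite [M in LHS]mx3E (expand_det_row _ 0) !big_ord_recl big_ord0 /cofactor.
by rewrite !(expand_det_row _ 0) !big_ord_recl !big_ord0 /cofactor !det_mx11 !mxE /=; ring.
Qed.

End Matrix3.

Section Rotation3.
Variables (F : fieldType) (c s : F).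

Lemma rot2_system_eq0 (a b x y : F) : a ^+ 2 + b ^+ 2 != 0 ->
  a * x - b * y = 0 -> b * x + a * y = 0 -> x = 0 /\ y = 0.
Proof.
move=> nz e1 e2.
have Ex : (a ^+ 2 + b ^+ 2) * x = a * (a * x - b * y) + b * (b * x + a * y) by ring.
have Ey : (a ^+ 2 + b ^+ 2) * y = a * (b * x + a * y) - b * (a * x - b * y) by ring.
rewrite e1 e2 !mulr0 addr0 subr0 in Ex Ey.
by split; apply/eqP; [move/eqP: Ex | move/eqP: Ey]; rewrite mulf_eq0 (negbTE nz).
Qed.

Definition rot3 : 'M[F]_3 := mx3 [:: [:: 1; 0; 0]; [:: 0; c; - s]; [:: 0; s; c]].

Definition rot3_commutant (v : 'rV[F]_3) : 'M[F]_3 :=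
  mx3 [:: [:: v 0 0; 0; 0]; [:: 0; v 0 1; v 0 2]; [:: 0; - v 0 2; v 0 1]].

Definition skew3 (w : 'rV[F]_3) : 'M[F]_3 :=
  mx3 [:: [:: 0; w 0 0; w 0 1]; [:: - w 0 0; 0; w 0 2]; [:: - w 0 1; - w 0 2; 0]].

Definition rot3_symmetry_system (H : 'M[F]_3) : 'M[F]_3 :=
  mx3 [:: [:: H 0 1; H 0 2; 0]; [:: - H 1 0; - H 2 0; H 1 2 - H 2 1];
          [:: - H 2 0; H 1 0; H 1 1 + H 2 2]].

Lemma rot3_commutant_eq0 v : (rot3_commutant v == 0) = (v == 0).
Proof.
apply/eqP/eqP => [/matrixP E | ->]; last by mx3_ext; rewrite ?oppr0.
have := E 0 0; have := E 1 1; have := E 1 2; rewrite !mxE /= => v2 v1 v0.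
by rv3_ext.
Qed.

Lemma skew3_eq0 w : (skew3 w == 0) = (w == 0).
Proof.
apply/eqP/eqP => [/matrixP E | ->]; last by mx3_ext; rewrite ?oppr0.
have := E 0 1; have := E 0 2; have := E 1 2; rewrite !mxE /= => w2 w1 w0.
by rv3_ext.
Qed.

Lemma rot3_commutant_skew v H : rot3_commutant v *m H - (rot3_commutant v *m H)^T
  = skew3 (v *m rot3_symmetry_system H).
Proof. by mx3_ext; ring. Qed.

Lemma det_rot3_form_commutator H : \det (form_commutator rot3 H)
  = s * ((1 - c) ^+ 2 + s ^+ 2) * \det (rot3_symmetry_system H).
Proof. by rewrite !det_mx3; mx_entries; ring. Qed.

Hypotheses (s_neq0 : s != 0) (q_neq0 : (1 - c) ^+ 2 + s ^+ 2 != 0).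

Lemma comm_rot3P X : comm_mx X rot3^T <-> exists v, X = rot3_commutant v.
Proof.
split => [|[v ->]]; last by mx3_ext; ring.
move=> /eqP; rewrite -subr_eq0 => /eqP/matrixP D.
have := D 0 1; have := D 0 2; have := D 1 0; have := D 2 0; have := D 1 1; have := D 1 2.
mx_entries => d12 d11 d20 d10 d02 d01.
have [x01 x02] : X 0 1 = 0 /\ X 0 2 = 0.
  apply: (@rot2_system_eq0 (c - 1) s); first by rewrite -opprB sqrrN.
    by rewrite -d01; ring.
  by rewrite -d02; ring.
have [x10 x20] : X 1 0 = 0 /\ X 2 0 = 0.
  apply: (@rot2_system_eq0 (1 - c) s) => //; first by rewrite -d10; ring.
  by rewrite -d20; ring.
have /eqP : s * (X 2 1 + X 1 2) = 0 by rewrite -oppr0 -d11; ring.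
rewrite mulf_eq0 (negbTE s_neq0) addr_eq0 => /eqP x21.
have /eqP : s * (X 1 1 - X 2 2) = 0 by rewrite -d12; ring.
rewrite mulf_eq0 (negbTE s_neq0) subr_eq0 => /eqP x22.
exists (rv3 (X 0 0) (X 1 1) (X 1 2)).
by mx3_ext; rewrite ?x01 ?x02 ?x10 ?x20 ?x21 ?x22.
Qed.

Lemma det_rot3_form_commutator_eq0 H :
  \det (form_commutator rot3 H) = 0 <-> commuting_symmetrizer rot3 H.
Proof.
have nz : s * ((1 - c) ^+ 2 + s ^+ 2) != 0 by rewrite mulf_neq0.
rewrite det_rot3_form_commutator.
split => [/eqP | [X nzX [/comm_rot3P [v XE] symX]]]; last subst X.
- rewrite mulf_eq0 (negbTE nz) => /det0P [v nzv vL].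
  exists (rot3_commutant v); first by rewrite rot3_commutant_eq0.
  split; first by apply/comm_rot3P; exists v.
  by apply/esym/eqP; rewrite -subr_eq0 rot3_commutant_skew vL skew3_eq0.
- apply/eqP; rewrite mulf_eq0 (negbTE nz); apply/det0P; exists v.
    by rewrite -rot3_commutant_eq0.
  by apply/eqP; rewrite -skew3_eq0 -rot3_commutant_skew symX subrr.
Qed.

End Rotation3.

Lemma rotmxE (R : realType) (t : R) : rotmx t = rot3 (cos t) (sin t).
Proof. by mx3_ext. Qed.

Theorem lemma11p4 (R : realType) (A G : 'M[R]_3) (t : R) :
  A \in unitmx -> G \in unitmx ->
  is_rotation A t -> 0 < t -> t < pi ->
  let B := invmx G *m invmx A^T *m G in
  (\det (1%:M - A *m B) = 0 <->
   exists S : 'M[R]_3, S != 0 /\ S^T = S /\ S *m B = invmx A^T *m S).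
Proof.
move=> uA uG [Q [mu [uQ [nz_mu AQ]]]] t_gt0 t_ltpi B.
have s_neq0 : sin t != 0 by rewrite gt_eqF // sin_gt0_pi // t_gt0.
have q_neq0 : (1 - cos t) ^+ 2 + sin t ^+ 2 != 0.
  by rewrite paddr_eq0 ?sqr_ge0 // (sqrf_eq0 (sin t)) (negbTE s_neq0) andbF.
apply: iff_trans (det_1_sub_contragredient_eq0 uA uG) _.
apply: iff_trans (iff_sym (det_form_commutator_change_basis_eq0 _ _ uQ)) _.
rewrite AQ; apply: iff_trans (det_form_commutatorZ_eq0 _ _ nz_mu) _.
rewrite rotmxE; apply: iff_trans (det_rot3_form_commutator_eq0 s_neq0 q_neq0 _) _.
rewrite -rotmxE; apply: iff_trans (iff_sym (commuting_symmetrizerZ _ _ nz_mu)) _.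
rewrite -AQ; apply: iff_trans (commuting_symmetrizer_change_basis _ _ uQ) _.
exact: iff_sym (sym_intertwinerP uA uG).
Qed.
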